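(* Let $(X,d)$ be a Cantor space and let $f\in\mathcal{H}(X)$ be equicontinuous. Then $f$ is topologically stable if and only if $f$ has the strict periodic shadowing property.
   Context: A Cantor space is a compact metric space without isolated points that is totally disconnected. $\mathcal{H}(X)$, $d_{C^0}$, $D$: set of homeomorphisms, $d_{C^0}(f,g)=\sup_x d(f(x),g(x))$, $D(f,g)=\max\{d_{C^0}(f,g),d_{C^0}(f^{-1},g^{-1})\}$. Equicontinuous: for every $\epsilon>0$ there is $\delta>0$ with $d(x,y)\le\delta\Rightarrow\sup_{i\in\mathbb{Z}}d(f^i(x),f^i(y))\le\epsilon$. Strict periodic shadowing property: for every $\epsilon>0$ there is $\delta>0$ such that for every $(x_i)_{i=0}^m$, $m\ge1$, with $d(f(x_i),x_{i+1})\le\delta$ and $x_0=x_m$, there is $p$ with $f^m(p)=p$ and $d(x_i,f^i(p))\le\epsilon$ for $0\le i\le m$. Topologically stable: for every $\epsilon>0$ there is $\delta>0$ such that every $g\in\mathcal{H}(X)$ with $D(f,g)<\delta$ admits a continuous $h:X\to X$ with $d_{C^0}(h,\mathrm{id}_X)<\epsilon$ and $h\circ g=f\circ h$. *)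

From Stdlib Require Import Reals List ZArith.
Open Scope R_scope.

Record is_metric {X : Type} (d : X -> X -> R) : Prop := {
  metric_nonneg : forall x y, 0 <= d x y;
  metric_zero : forall x y, d x y = 0 <-> x = y;
  metric_sym : forall x y, d x y = d y x;
  metric_triangle : forall x y z, d x z <= d x y + d y z
}.

Definition is_open {X : Type} (d : X -> X -> R) (U : X -> Prop) : Prop :=
  forall x, U x -> exists r, 0 < r /\ forall y, d x y < r -> U y.

Definition compact_space {X : Type} (d : X -> X -> R) : Prop :=
  forall (I : Type) (U : I -> X -> Prop),
    (forall i, is_open d (U i)) ->
    (forall x, exists i, U i x) ->
    exists l : list I, forall x, exists i, In i l /\ U i x.

Definition no_isolated_points {X : Type} (d : X -> X -> R) : Prop :=
  forall x eps, 0 < eps -> exists y, y <> x /\ d x y < eps.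

Definition connected_set {X : Type} (d : X -> X -> R) (A : X -> Prop) : Prop :=
  forall U V : X -> Prop, is_open d U -> is_open d V ->
    (forall x, A x -> U x \/ V x) ->
    (forall x, A x -> U x -> V x -> False) ->
    (forall x, A x -> U x) \/ (forall x, A x -> V x).

Definition totally_disconnected {X : Type} (d : X -> X -> R) : Prop :=
  forall A : X -> Prop, connected_set d A -> forall x y, A x -> A y -> x = y.

Definition cantor_space {X : Type} (d : X -> X -> R) : Prop :=
  is_metric d /\ compact_space d /\ no_isolated_points d /\ totally_disconnected d.

Definition continuous_map {X : Type} (d : X -> X -> R) (f : X -> X) : Prop :=
  forall x eps, 0 < eps -> exists delta, 0 < delta /\
    forall y, d x y < delta -> d (f x) (f y) < eps.

Definition is_homeo {X : Type} (d : X -> X -> R) (f finv : X -> X) : Prop :=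
  continuous_map d f /\ continuous_map d finv /\
  (forall x, finv (f x) = x) /\ (forall x, f (finv x) = x).

(* d_{C^0}(f,g) < c, i.e. sup_x d(f x, g x) < c. *)
Definition dC0_lt {X : Type} (d : X -> X -> R) (f g : X -> X) (c : R) : Prop :=
  exists c', c' < c /\ forall x, d (f x) (g x) <= c'.

Definition D_lt {X : Type} (d : X -> X -> R) (f finv g ginv : X -> X) (c : R) : Prop :=
  dC0_lt d f g c /\ dC0_lt d finv ginv c.

Definition iterz {X : Type} (f finv : X -> X) (i : Z) (x : X) : X :=
  match i with
  | Z0 => x
  | Zpos p => Nat.iter (Pos.to_nat p) f x
  | Zneg p => Nat.iter (Pos.to_nat p) finv x
  end.

Definition equicontinuous {X : Type} (d : X -> X -> R) (f finv : X -> X) : Prop :=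
  forall eps, 0 < eps -> exists delta, 0 < delta /\
    forall x y, d x y <= delta ->
      forall i : Z, d (iterz f finv i x) (iterz f finv i y) <= eps.

Definition strict_periodic_shadowing {X : Type} (d : X -> X -> R) (f : X -> X) : Prop :=
  forall eps, 0 < eps -> exists delta, 0 < delta /\
    forall (m : nat) (xs : nat -> X), (1 <= m)%nat ->
      (forall i, (i < m)%nat -> d (f (xs i)) (xs (S i)) <= delta) ->
      xs 0%nat = xs m ->
      exists p, Nat.iter m f p = p /\
        forall i, (i <= m)%nat -> d (xs i) (Nat.iter i f p) <= eps.

Definition topologically_stable {X : Type} (d : X -> X -> R) (f finv : X -> X) : Prop :=
  forall eps, 0 < eps -> exists delta, 0 < delta /\
    forall g ginv : X -> X, is_homeo d g ginv ->
      D_lt d f finv g ginv delta ->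
      exists h : X -> X, continuous_map d h /\
        dC0_lt d h (fun x => x) eps /\
        (forall x, h (g x) = f (h x)).

(* Equicontinuity on a compact totally disconnected space gives, at every scale, an
   f-invariant clopen partition (x ~ y when f^n x and f^n y are joined by fine chains
   for every n), and every class returns to itself under f. Both properties in the
   theorem are equivalent to: each cycle of classes of a fine invariant partition is
   shadowed by a periodic orbit of the same length.
   - Given such shadowing orbits, a map that is constant on classes and sends the
     classes of each cycle to the successive points of its shadowing orbit
     semiconjugates every g close to f to f; and a closed pseudo-orbit never leaves
     a cycle of classes, so it is shadowed as well.
   - Conversely, periodic shadowing applies to the pseudo-orbit a, f a, ..., a; and
     topological stability applies to g = tau o f, where the involution tau swaps a
     small clopen neighbourhood of a with its image under f^L: g has a genuine
     periodic orbit through a, which the semiconjugacy sends to a periodic orbit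
     of f. *)

From Stdlib Require Import Reals List ZArith Lia Lra Wf_nat.
From Stdlib Require Import Classical ClassicalEpsilon FunctionalExtensionality PropExtensionality.
Open Scope R_scope.

Lemma iter_cancel {X : Type} (f g : X -> X) :
  (forall x, g (f x) = x) -> forall n x, Nat.iter n g (Nat.iter n f x) = x.
Proof.
  intros Hgf n; induction n as [|n IH]; intro x; [reflexivity|].
  rewrite Nat.iter_succ_r, Nat.iter_succ, Hgf. apply IH.
Qed.

Lemma iterz_of_nat {X : Type} (f finv : X -> X) n x :
  iterz f finv (Z.of_nat n) x = Nat.iter n f x.
Proof. destruct n; [reflexivity|]. simpl. now rewrite SuccNat2Pos.id_succ. Qed.

Lemma iterz_opp_of_nat {X : Type} (f finv : X -> X) n x :
  iterz f finv (- Z.of_nat n) x = Nat.iter n finv x.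
Proof. destruct n; [reflexivity|]. simpl. now rewrite SuccNat2Pos.id_succ. Qed.

Lemma iter_mod_period {X : Type} (f : X -> X) L p :
  Nat.iter L f p = p -> forall k, Nat.iter k f p = Nat.iter (k mod L) f p.
Proof.
  intros Hp k.
  replace (Nat.iter k f p) with (Nat.iter (k mod L + L * (k / L)) f p)
    by (now rewrite Nat.add_comm, <- Nat.div_mod_eq).
  rewrite Nat.iter_add. f_equal. induction (k / L)%nat as [|q IH]; [now rewrite Nat.mul_0_r|].
  now rewrite Nat.mul_succ_r, Nat.iter_add, Hp.
Qed.

Definition mesh (n : nat) : R := / INR (S n).

Lemma mesh_pos n : 0 < mesh n.
Proof. apply Rinv_0_lt_compat, lt_0_INR. lia. Qed.

Lemma mesh_antitone n m : (n <= m)%nat -> mesh m <= mesh n.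
Proof. intro Hnm. apply Rinv_le_contravar; [apply lt_0_INR; lia|apply le_INR; lia]. Qed.

Lemma mesh_eventually_lt r : 0 < r -> exists N, forall n, (N <= n)%nat -> mesh n < r.
Proof.
  intro Hr. destruct (archimed_cor1 r Hr) as [N [HN HN0]]. exists N. intros n Hn.
  eapply Rle_lt_trans; [|exact HN]. apply Rinv_le_contravar; [now apply lt_0_INR|].
  apply le_INR. lia.
Qed.

Definition locally_constant {X : Type} (d : X -> X -> R) (P : X -> Prop) : Prop :=
  forall z, exists r, 0 < r /\ forall y, d z y < r -> (P y <-> P z).

Definition cluster_point {X : Type} (d : X -> X -> R) (u : nat -> X) (w : X) : Prop :=
  forall r, 0 < r -> forall N, exists n, (N <= n)%nat /\ d w (u n) < r.

Section Metric.

Context {X : Type} {d : X -> X -> R} (Hm : is_metric d).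

Lemma dist_self x : d x x = 0.
Proof. now apply (metric_zero d Hm). Qed.

Lemma ball_open c r : is_open d (fun z => d c z < r).
Proof.
  intros x Hx. exists (r - d c x). split; [lra|].
  intros y Hy. pose proof (metric_triangle d Hm c x y). lra.
Qed.

Lemma continuous_comp (f g : X -> X) :
  continuous_map d f -> continuous_map d g -> continuous_map d (fun x => g (f x)).
Proof.
  intros Hf Hg x e He. destruct (Hg (f x) e He) as [r1 [Hr1 H1]].
  destruct (Hf x r1 Hr1) as [r2 [Hr2 H2]]. exists r2; split; auto.
Qed.

Lemma continuous_iter (f : X -> X) n :
  continuous_map d f -> continuous_map d (Nat.iter n f).
Proof.
  intro Hf. induction n as [|n IH].
  - intros x e He. exists e; split; auto.
  - exact (continuous_comp _ _ IH Hf).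
Qed.

Lemma continuous_at_of_local (phi psi : X -> X) z r : 0 < r ->
  (forall y, d z y < r -> phi y = psi y) -> continuous_map d psi ->
  forall e, 0 < e -> exists delta, 0 < delta /\ forall y, d z y < delta -> d (phi z) (phi y) < e.
Proof.
  intros Hr Hagree Hpsi e He. destruct (Hpsi z e He) as [s [Hs Hb]].
  exists (Rmin r s). split; [now apply Rmin_pos|]. intros y Hy.
  pose proof (Rmin_l r s). pose proof (Rmin_r r s).
  rewrite !Hagree; [apply Hb; lra|lra|rewrite dist_self; lra].
Qed.

Lemma continuous_locally_constant (g : X -> X) (P : X -> Prop) :
  continuous_map d g -> locally_constant d P -> locally_constant d (fun z => P (g z)).
Proof.
  intros Hg HP z. destruct (HP (g z)) as [r [Hr Hb]].
  destruct (Hg z r Hr) as [s [Hs Hgs]]. exists s. split; auto.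
Qed.

(* A point with no nearby terms from some index on has a ball avoiding a tail;
   finitely many such balls cannot cover the tail beyond the largest index. *)
Lemma compact_cluster_point (Hc : compact_space d) (u : nat -> X) :
  exists w, cluster_point d u w.
Proof.
  apply NNPP; intro Hno.
  assert (Hfar : forall w, exists p : R * nat,
             0 < fst p /\ forall n, (snd p <= n)%nat -> fst p <= d w (u n)).
  { intro w. apply NNPP; intro H1. apply Hno. exists w. intros r Hr N.
    apply NNPP; intro H2. apply H1. exists (r, N). simpl. split; [lra|].
    intros n Hn. apply Rnot_lt_le. intro H3. apply H2. eauto. }
  destruct (choice _ Hfar) as [p Hp].
  destruct (Hc X (fun w z => d w z < fst (p w))) as [l Hl].
  - intro w. apply ball_open.
  - intro x. exists x. rewrite dist_self. apply Hp.
  - set (N := list_max (map (fun w => snd (p w)) l)).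
    destruct (Hl (u N)) as [w [Hw Hin]].
    assert (HN : (snd (p w) <= N)%nat).
    { assert (Hall := proj1 (list_max_le _ N) (Nat.le_refl N)).
      rewrite Forall_forall in Hall. apply Hall, in_map_iff. eauto. }
    pose proof (proj2 (Hp w) N HN). lra.
Qed.

End Metric.

Inductive chain {X : Type} (d : X -> X -> R) (l : R) : X -> X -> Prop :=
| chain_refl x : chain d l x x
| chain_step x y z : d x y < l -> chain d l y z -> chain d l x z.

Definition chain_component {X : Type} (d : X -> X -> R) (x w : X) : Prop :=
  forall l, 0 < l -> chain d l x w.

Definition thickening {X : Type} (d : X -> X -> R) (K U : X -> Prop) (z : X) : Prop :=
  exists w r, K w /\ 0 < r /\ (forall y, d w y < 2 * r -> U y) /\ d w z < r.

Section Chains.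

Context {X : Type} {d : X -> X -> R} (Hm : is_metric d).

Lemma chain_trans l x y z : chain d l x y -> chain d l y z -> chain d l x z.
Proof. induction 1; auto. intro. econstructor; eauto. Qed.

Lemma chain_snoc l x y z : chain d l x y -> d y z < l -> chain d l x z.
Proof. intros H1 H2. eapply chain_trans; eauto. econstructor; eauto. constructor. Qed.

Lemma chain_le l l' x y : l <= l' -> chain d l x y -> chain d l' x y.
Proof. intros Hl; induction 1; econstructor; eauto. lra. Qed.

Lemma chain_sym l x y : chain d l x y -> chain d l y x.
Proof.
  induction 1; [constructor|]. eapply chain_snoc; eauto. now rewrite metric_sym.
Qed.

Lemma chain_exit l (S : X -> Prop) a b :
  chain d l a b -> S a -> ~ S b ->
  exists u v, chain d l a u /\ S u /\ ~ S v /\ d u v < l.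
Proof.
  induction 1 as [x|x y z Hxy Hyz IH]; intros Ha Hb; [tauto|].
  destruct (classic (S y)) as [Hy|Hy].
  - destruct (IH Hy Hb) as [u [v [H1 H2]]]. exists u, v. split; auto. econstructor; eauto.
  - exists x, y. repeat split; auto. constructor.
Qed.

Lemma chain_locally_constant l a : 0 < l -> locally_constant d (chain d l a).
Proof.
  intros Hl z. exists l. split; auto. intros y Hy. split; intro H.
  - eapply chain_snoc; eauto. now rewrite metric_sym.
  - eapply chain_snoc; eauto.
Qed.

Lemma chain_component_of_cluster x (u : nat -> X) w :
  (forall n, chain d (mesh n) x (u n)) -> cluster_point d u w -> chain_component d x w.
Proof.
  intros Hu Hw l Hl. destruct (mesh_eventually_lt (l/2)) as [N HN]; [lra|].
  destruct (Hw (l/2) ltac:(lra) N) as [n [Hn Hd]].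
  eapply chain_snoc; [apply (chain_le (mesh n)), Hu; specialize (HN n Hn); lra|].
  rewrite metric_sym; auto; lra.
Qed.

Lemma thickening_open K U : is_open d (thickening d K U).
Proof.
  intros z [w [r [Kw [Hr [Hb Hz]]]]]. exists (r - d w z). split; [lra|].
  intros y Hy. exists w, r. repeat split; auto.
  pose proof (metric_triangle d Hm w z y). lra.
Qed.

Lemma thickening_sub (K U : X -> Prop) z : is_open d U -> K z -> U z -> thickening d K U z.
Proof.
  intros HU Kz Uz. destruct (HU z Uz) as [r [Hr Hb]]. exists z, (r/2).
  rewrite (dist_self Hm). repeat split; auto; try lra. intros y Hy; apply Hb; lra.
Qed.

(* The smaller of the two radii puts one centre inside the other's doubled ball. *)
Lemma thickening_disjoint (K U V : X -> Prop) :
  (forall z, K z -> U z -> V z -> False) ->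
  forall z, thickening d K U z -> thickening d K V z -> False.
Proof.
  intros Hdis z [w [r [Kw [Hr [Hb Hz]]]]] [w' [r' [Kw' [Hr' [Hb' Hz']]]]].
  pose proof (metric_triangle d Hm w z w'). pose proof (metric_triangle d Hm w' z w).
  pose proof (metric_sym d Hm z w'). pose proof (metric_sym d Hm z w).
  pose proof (metric_sym d Hm w w').
  destruct (Rle_lt_dec r' r).
  - apply (Hdis w' Kw'); [apply Hb|apply Hb']; rewrite ?(dist_self Hm); lra.
  - apply (Hdis w Kw); [apply Hb|apply Hb']; rewrite ?(dist_self Hm); lra.
Qed.

Section Compact.

Hypothesis Hc : compact_space d.

(* A chain of mesh 1/(n+1) from x to a point outside U leaves the thickening of U at
   some u_n; a cluster point of the u_n lies in the component but can be neither in U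
   nor in V. *)
Lemma chain_component_stays (x : X) (U V : X -> Prop) :
  is_open d U -> is_open d V ->
  (forall z, chain_component d x z -> U z \/ V z) ->
  (forall z, chain_component d x z -> U z -> V z -> False) ->
  U x -> forall w, chain_component d x w -> U w.
Proof.
  intros HU HV Hcov Hdis Ux w0 Kw0. apply NNPP; intro nUw0.
  set (K := chain_component d x).
  set (U' := thickening d K U). set (V' := thickening d K V).
  assert (Kx : K x) by (intros l Hl; constructor).
  assert (Hexit : forall n, exists p : X * X,
             chain d (mesh n) x (fst p) /\ U' (fst p) /\ ~ U' (snd p) /\
             d (fst p) (snd p) < mesh n).
  { intro n. destruct (chain_exit (mesh n) U' x w0) as [u [v H]].
    - apply Kw0, mesh_pos.
    - now apply thickening_sub.
    - intro H. apply (thickening_disjoint K U V Hdis w0); auto.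
      apply thickening_sub; auto. destruct (Hcov w0 Kw0); tauto.
    - now exists (u, v). }
  destruct (choice _ Hexit) as [p Hp].
  destruct (compact_cluster_point Hm Hc (fun n => fst (p n))) as [w Hw].
  assert (Kw : K w) by (apply (chain_component_of_cluster x (fun n => fst (p n))); auto; apply Hp).
  destruct (Hcov w Kw) as [Uw|Vw].
  - destruct (thickening_open K U w (thickening_sub K U w HU Kw Uw)) as [r [Hr Hb]].
    destruct (mesh_eventually_lt (r/2)) as [N HN]; [lra|].
    destruct (Hw (r/2) ltac:(lra) N) as [n [Hn Hd]].
    destruct (Hp n) as [_ [_ [HnU Hnd]]]. specialize (HN n Hn).
    apply HnU, Hb. pose proof (metric_triangle d Hm w (fst (p n)) (snd (p n))). lra.
  - destruct (thickening_open K V w (thickening_sub K V w HV Kw Vw)) as [r [Hr Hb]].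
    destruct (Hw r Hr 0%nat) as [n [_ Hd]].
    apply (thickening_disjoint K U V Hdis (fst (p n))); [apply Hp|auto].
Qed.

Lemma chain_component_connected x : connected_set d (chain_component d x).
Proof.
  intros U V HU HV Hcov Hdis.
  assert (Kx : chain_component d x x) by (intros l Hl; constructor).
  destruct (Hcov x Kx) as [Ux|Vx].
  - left. now apply (chain_component_stays x U V).
  - right. apply (chain_component_stays x V U); auto.
    + intros z Kz; destruct (Hcov z Kz); tauto.
    + intros z Kz H1 H2; eapply Hdis; eauto.
Qed.

Hypothesis Htd : totally_disconnected d.

(* Otherwise far-apart pairs joined by ever finer chains would produce, at a cluster
   point x, a second point of the chain component of x. *)
Lemma chain_small_diameter eps : 0 < eps ->
  exists l, 0 < l /\ forall x y, chain d l x y -> d x y < eps.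
Proof.
  intro He. apply NNPP; intro Hno.
  assert (Hfar : forall n, exists p : X * X,
             chain d (mesh n) (fst p) (snd p) /\ eps <= d (fst p) (snd p)).
  { intro n. apply NNPP; intro H1. apply Hno. exists (mesh n). split; [apply mesh_pos|].
    intros x y Hxy. apply Rnot_le_lt. intro H2. apply H1. now exists (x, y). }
  destruct (choice _ Hfar) as [p Hp].
  destruct (compact_cluster_point Hm Hc (fun n => fst (p n))) as [x Hx].
  assert (Hfar_x : forall n, exists z, chain d (mesh n) x z /\ eps/2 <= d x z).
  { intro n. destruct (Hx (Rmin (mesh n) (eps/2)) ltac:(apply Rmin_pos; [apply mesh_pos|lra]) n)
      as [m [Hnm Hd]].
    pose proof (Rmin_l (mesh n) (eps/2)). pose proof (Rmin_r (mesh n) (eps/2)).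
    destruct (Hp m) as [Hch Hdist]. exists (snd (p m)). split.
    - apply chain_step with (y := fst (p m)); [lra|].
      apply (chain_le (mesh m)); auto. now apply mesh_antitone.
    - pose proof (metric_triangle d Hm (fst (p m)) x (snd (p m))).
      pose proof (metric_sym d Hm x (fst (p m))). lra. }
  destruct (choice _ Hfar_x) as [z Hz].
  destruct (compact_cluster_point Hm Hc z) as [y Hy].
  assert (Kx : chain_component d x x) by (intros l Hl; constructor).
  assert (Ky : chain_component d x y) by (apply (chain_component_of_cluster x z); auto; apply Hz).
  pose proof (Htd _ (chain_component_connected x) x y Kx Ky) as Exy. subst y.
  destruct (Hy (eps/2) ltac:(lra) 0%nat) as [n [_ Hd]]. pose proof (proj2 (Hz n)). lra.
Qed.

Lemma small_clopen_nbhd a r : 0 < r ->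
  exists W : X -> Prop, W a /\ (forall z, W z -> d a z < r) /\ locally_constant d W.
Proof.
  intro Hr. destruct (chain_small_diameter r Hr) as [l [Hl Hsmall]].
  exists (chain d l a). split; [constructor|]. split; auto.
  now apply chain_locally_constant.
Qed.

End Compact.

End Chains.

Record invariant_equivalence {X : Type} (f : X -> X) (E : X -> X -> Prop) : Prop := {
  ie_refl : forall x, E x x;
  ie_sym : forall x y, E x y -> E y x;
  ie_trans : forall x y z, E x y -> E y z -> E x z;
  ie_map : forall x y, E x y -> E (f x) (f y)
}.

(* The classes of E form an f-invariant partition into clopen sets. *)
Record invariant_partition {X : Type} (d : X -> X -> R) (f : X -> X) (eps delta : R)
    (E : X -> X -> Prop) : Prop := {
  ip_equiv :> invariant_equivalence f E;
  ip_delta_pos : 0 < delta;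
  ip_diam : forall x y, E x y -> d x y < eps;
  ip_ball : forall x y, d x y <= delta -> E x y
}.

Arguments ie_refl {X f E} _ _.
Arguments ie_sym {X f E} _ _ _.
Arguments ie_trans {X f E} _ _ _ _.
Arguments ie_map {X f E} _ _ _.
Arguments ip_delta_pos {X d f eps delta E} _.
Arguments ip_diam {X d f eps delta E} _ _ _.
Arguments ip_ball {X d f eps delta E} _ _ _.

Lemma invariant_partition_mono {X : Type} {d : X -> X -> R} {f eps eps' delta E} :
  eps <= eps' -> invariant_partition d f eps delta E -> invariant_partition d f eps' delta E.
Proof.
  intros Hle P. split; try apply P. intros x y Hxy. pose proof (ip_diam P x y Hxy). lra.
Qed.

Definition first_return {X : Type} (f : X -> X) (E : X -> X -> Prop) (a : X) (L : nat) : Prop :=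
  (1 <= L)%nat /\ E (Nat.iter L f a) a /\
  forall k, (1 <= k)%nat -> (k < L)%nat -> ~ E (Nat.iter k f a) a.

Section ClassDynamics.

Context {X : Type} {f : X -> X} {E : X -> X -> Prop} (HE : invariant_equivalence f E).

Lemma rel_iter n x y : E x y -> E (Nat.iter n f x) (Nat.iter n f y).
Proof. intro H. induction n as [|n IH]; [exact H|]. now apply (ie_map HE). Qed.

Lemma rel_iter_mul a L : E (Nat.iter L f a) a -> forall q, E (Nat.iter (L * q) f a) a.
Proof.
  intros HL q. induction q as [|q IH]; [rewrite Nat.mul_0_r; apply (ie_refl HE)|].
  rewrite Nat.mul_succ_r, Nat.iter_add.
  eapply (ie_trans HE); [apply rel_iter, HL|exact IH].
Qed.

Lemma rel_iter_mod a L :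
  E (Nat.iter L f a) a -> forall k, E (Nat.iter k f a) (Nat.iter (k mod L) f a).
Proof.
  intros HL k.
  replace (Nat.iter k f a) with (Nat.iter (k mod L) f (Nat.iter (L * (k / L)) f a))
    by (now rewrite <- Nat.iter_add, Nat.add_comm, <- Nat.div_mod_eq).
  now apply rel_iter, rel_iter_mul.
Qed.

Lemma first_return_exists a :
  (exists L, (1 <= L)%nat /\ E (Nat.iter L f a) a) -> exists L, first_return f E a L.
Proof.
  intro Hex.
  destruct (dec_inh_nat_subset_has_unique_least_element _ (fun n => classic _) Hex)
    as [L [[[HL1 HL2] Hleast] _]].
  exists L. repeat split; auto. intros k Hk1 Hk2 Hk. specialize (Hleast k (conj Hk1 Hk)). lia.
Qed.

(* From f^r a ~ f^r' a with r < r' < L, applying f^(L - r') returns a's class too early. *)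
Lemma first_return_inj a L r r' :
  first_return f E a L -> (r < L)%nat -> (r' < L)%nat ->
  E (Nat.iter r f a) (Nat.iter r' f a) -> r = r'.
Proof.
  intros [HL1 [HL2 Hmin]].
  assert (Hlt : forall r r', (r < r')%nat -> (r' < L)%nat ->
                  E (Nat.iter r f a) (Nat.iter r' f a) -> False).
  { intros s s' Hss' Hs' Hrel. apply (Hmin (L - s' + s)%nat); try lia.
    eapply (ie_trans HE); [|exact HL2].
    assert (HLs : Nat.iter L f a = Nat.iter (L - s') f (Nat.iter s' f a))
      by (rewrite <- Nat.iter_add; f_equal; lia).
    rewrite HLs, Nat.iter_add. now apply rel_iter. }
  intros Hr Hr' Hrel. destruct (Nat.lt_trichotomy r r') as [H|[H|H]]; auto; exfalso.
  - exact (Hlt r r' H Hr' Hrel).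
  - exact (Hlt r' r H Hr (ie_sym HE _ _ Hrel)).
Qed.

Lemma first_return_divides a L m :
  first_return f E a L -> E (Nat.iter m f a) a -> (m mod L = 0)%nat.
Proof.
  intros HL Hm. pose proof HL as [HL1 [HL2 _]].
  apply (first_return_inj a L (m mod L) 0 HL); [apply Nat.mod_upper_bound; lia|lia|].
  eapply (ie_trans HE); [apply (ie_sym HE), rel_iter_mod, HL2|exact Hm].
Qed.

End ClassDynamics.

(* Given shadowing points for the cycles of classes, choose one class on each cycle
   and one shadowing point per chosen class; the class reached after r steps along the
   cycle is sent to the r-th iterate of that point. *)
Section CycleConjugacy.

Context {X : Type} {f : X -> X} {E : X -> X -> Prop} (HE : invariant_equivalence f E).
Variable near : X -> X -> Prop.
Hypothesis recurrent : forall y, exists L, (1 <= L)%nat /\ E (Nat.iter L f y) y.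
Hypothesis cycles_shadowed : forall a L, first_return f E a L ->
  exists p, Nat.iter L f p = p /\ forall i, (i < L)%nat -> near (Nat.iter i f a) (Nat.iter i f p).

Definition in_class_orbit (y z : X) : Prop := exists n, E z (Nat.iter n f y).

Lemma in_class_orbit_rel y y' : E y y' -> in_class_orbit y = in_class_orbit y'.
Proof.
  intro H. apply functional_extensionality; intro z. apply propositional_extensionality.
  split; intros [n Hn]; exists n; (eapply (ie_trans HE); [exact Hn|]);
    apply (rel_iter HE); auto; now apply (ie_sym HE).
Qed.

Lemma in_class_orbit_map y : in_class_orbit (f y) = in_class_orbit y.
Proof.
  apply functional_extensionality; intro z. apply propositional_extensionality.
  split; intros [n Hn].
  - exists (S n). now rewrite Nat.iter_succ_r.
  - destruct (recurrent y) as [L [HL HLy]]. exists (n + L - 1)%nat.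
    rewrite <- Nat.iter_succ_r. replace (S (n + L - 1)) with (n + L)%nat by lia.
    rewrite Nat.iter_add. eapply (ie_trans HE); [exact Hn|]. apply (ie_sym HE), (rel_iter HE), HLy.
Qed.

Definition cycle_rep (y : X) : X := epsilon (inhabits y) (in_class_orbit y).

Lemma cycle_rep_rel y y' : E y y' -> cycle_rep y = cycle_rep y'.
Proof.
  intro H. unfold cycle_rep. rewrite (in_class_orbit_rel y y' H).
  apply epsilon_inh_irrelevance. exists y', 0%nat. apply (ie_refl HE).
Qed.

Lemma cycle_rep_map y : cycle_rep (f y) = cycle_rep y.
Proof.
  unfold cycle_rep. rewrite in_class_orbit_map.
  apply epsilon_inh_irrelevance. exists y, 0%nat. apply (ie_refl HE).
Qed.

Lemma cycle_rep_reaches y : exists k, E y (Nat.iter k f (cycle_rep y)).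
Proof.
  assert (Hrep : in_class_orbit y (cycle_rep y)).
  { unfold cycle_rep. apply epsilon_spec. exists y, 0%nat. apply (ie_refl HE). }
  destruct Hrep as [n Hn]. destruct (recurrent y) as [L [HL HLy]].
  exists (L * n - n)%nat. apply (ie_sym HE). eapply (ie_trans HE); [apply (rel_iter HE), Hn|].
  rewrite <- Nat.iter_add. replace (L * n - n + n)%nat with (L * n)%nat by nia.
  now apply (rel_iter_mul HE).
Qed.

Definition cycle_length (a : X) : nat := epsilon (inhabits 0%nat) (first_return f E a).

Lemma cycle_length_spec a : first_return f E a (cycle_length a).
Proof. unfold cycle_length. apply epsilon_spec, first_return_exists, recurrent. Qed.

Definition cycle_point (a : X) : X :=
  epsilon (inhabits a) (fun p => Nat.iter (cycle_length a) f p = p /\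
    forall i, (i < cycle_length a)%nat -> near (Nat.iter i f a) (Nat.iter i f p)).

Lemma cycle_point_spec a : Nat.iter (cycle_length a) f (cycle_point a) = cycle_point a /\
  forall i, (i < cycle_length a)%nat -> near (Nat.iter i f a) (Nat.iter i f (cycle_point a)).
Proof. unfold cycle_point. apply epsilon_spec, cycles_shadowed, cycle_length_spec. Qed.

Definition phase (y : X) : nat :=
  epsilon (inhabits 0%nat) (fun r => (r < cycle_length (cycle_rep y))%nat /\
                                     E y (Nat.iter r f (cycle_rep y))).

Lemma phase_spec y : (phase y < cycle_length (cycle_rep y))%nat /\
  E y (Nat.iter (phase y) f (cycle_rep y)).
Proof.
  unfold phase. apply epsilon_spec. destruct (cycle_rep_reaches y) as [k Hk].
  pose proof (cycle_length_spec (cycle_rep y)) as [HL1 [HL2 _]].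
  exists (k mod cycle_length (cycle_rep y)). split; [apply Nat.mod_upper_bound; lia|].
  eapply (ie_trans HE); [exact Hk|]. now apply (rel_iter_mod HE).
Qed.

Lemma phase_unique y r : (r < cycle_length (cycle_rep y))%nat ->
  E y (Nat.iter r f (cycle_rep y)) -> phase y = r.
Proof.
  intros Hr Hy. destruct (phase_spec y) as [Hp1 Hp2].
  apply (first_return_inj HE _ _ _ _ (cycle_length_spec _) Hp1 Hr).
  eapply (ie_trans HE); [apply (ie_sym HE), Hp2|exact Hy].
Qed.

Definition class_conjugacy (y : X) : X := Nat.iter (phase y) f (cycle_point (cycle_rep y)).

Lemma class_conjugacy_rel y y' : E y y' -> class_conjugacy y = class_conjugacy y'.
Proof.
  intro H. unfold class_conjugacy. rewrite (cycle_rep_rel y y' H). f_equal.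
  destruct (phase_spec y) as [H1 H2]. rewrite (cycle_rep_rel y y' H) in H1, H2.
  symmetry. apply phase_unique; auto. eapply (ie_trans HE); [apply (ie_sym HE), H|exact H2].
Qed.

(* The phase of f y is phase y + 1, except at the end of the cycle where it wraps to 0
   and the periodicity of the cycle point takes over. *)
Lemma class_conjugacy_map y : class_conjugacy (f y) = f (class_conjugacy y).
Proof.
  unfold class_conjugacy. rewrite cycle_rep_map. destruct (phase_spec y) as [H1 H2].
  pose proof (cycle_length_spec (cycle_rep y)) as [HL1 [HL2 _]].
  assert (Hfy : E (f y) (Nat.iter (S (phase y)) f (cycle_rep y))) by (now apply (ie_map HE)).
  destruct (Nat.eq_dec (S (phase y)) (cycle_length (cycle_rep y))) as [Hend|Hmid].
  - assert (Hph : phase (f y) = 0%nat).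
    { apply phase_unique; rewrite cycle_rep_map; [lia|].
      eapply (ie_trans HE); [exact Hfy|]. now rewrite Hend. }
    rewrite Hph, <- Nat.iter_succ, Hend. symmetry. apply cycle_point_spec.
  - assert (Hph : phase (f y) = S (phase y)).
    { apply phase_unique; rewrite cycle_rep_map; [lia|exact Hfy]. }
    now rewrite Hph.
Qed.

Lemma class_conjugacy_shadow y : exists z, E y z /\ near z (class_conjugacy y).
Proof.
  destruct (phase_spec y) as [H1 H2]. exists (Nat.iter (phase y) f (cycle_rep y)).
  split; auto. now apply cycle_point_spec.
Qed.

Lemma class_cycle_conjugacy : exists h : X -> X,
  (forall y y', E y y' -> h y = h y') /\ (forall y, h (f y) = f (h y)) /\
  (forall y, exists z, E y z /\ near z (h y)).
Proof.
  exists class_conjugacy.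
  split; [exact class_conjugacy_rel|].
  split; [exact class_conjugacy_map|exact class_conjugacy_shadow].
Qed.

End CycleConjugacy.

Definition swap {X : Type} (F G : X -> X) (W : X -> Prop) (z : X) : X :=
  if excluded_middle_informative (W z) then F z
  else if excluded_middle_informative (W (G z)) then G z else z.

Section Swap.

Context {X : Type} {F G : X -> X} {W : X -> Prop}.
Hypotheses (HGF : forall x, G (F x) = x) (HFG : forall x, F (G x) = x).
Hypothesis W_disjoint : forall z, W z -> W (G z) -> False.

Lemma swap_in z : W z -> swap F G W z = F z.
Proof. intro Hz. unfold swap. now destruct (excluded_middle_informative (W z)). Qed.

Lemma swap_image z : W (G z) -> swap F G W z = G z.
Proof.
  intro Hz. unfold swap. destruct (excluded_middle_informative (W z)) as [H|H].
  - exfalso. eauto.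
  - now destruct (excluded_middle_informative (W (G z))).
Qed.

Lemma swap_out z : ~ W z -> ~ W (G z) -> swap F G W z = z.
Proof.
  intros H1 H2. unfold swap.
  destruct (excluded_middle_informative (W z)); [tauto|].
  now destruct (excluded_middle_informative (W (G z))).
Qed.

Lemma swap_involutive z : swap F G W (swap F G W z) = z.
Proof.
  destruct (classic (W z)) as [H1|H1].
  - rewrite (swap_in z H1), swap_image; [apply HGF|now rewrite HGF].
  - destruct (classic (W (G z))) as [H2|H2].
    + rewrite (swap_image z H2), (swap_in _ H2). apply HFG.
    + now rewrite !(swap_out z H1 H2).
Qed.

Context {d : X -> X -> R} (Hm : is_metric d).
Hypotheses (HF : continuous_map d F) (HG : continuous_map d G).
Hypothesis W_clopen : locally_constant d W.

Lemma swap_continuous : continuous_map d (swap F G W).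
Proof.
  intros z.
  destruct (W_clopen z) as [r1 [Hr1 Hb1]].
  destruct (continuous_locally_constant _ _ HG W_clopen z) as [r2 [Hr2 Hb2]].
  assert (Hr : 0 < Rmin r1 r2) by (now apply Rmin_pos).
  assert (Hnear : forall y, d z y < Rmin r1 r2 -> (W y <-> W z) /\ (W (G y) <-> W (G z))).
  { intros y Hy. pose proof (Rmin_l r1 r2). pose proof (Rmin_r r1 r2).
    split; [apply Hb1|apply Hb2]; lra. }
  destruct (classic (W z)) as [H1|H1]; [|destruct (classic (W (G z))) as [H2|H2]].
  - apply (continuous_at_of_local Hm (swap F G W) F z _ Hr); auto.
    intros y Hy. apply swap_in, (Hnear y Hy), H1.
  - apply (continuous_at_of_local Hm (swap F G W) G z _ Hr); auto.
    intros y Hy. apply swap_image, (Hnear y Hy), H2.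
  - apply (continuous_at_of_local Hm (swap F G W) (fun x => x) z _ Hr).
    + intros y Hy. destruct (Hnear y Hy) as [E1 E2].
      apply swap_out; [rewrite E1|rewrite E2]; assumption.
    + intros x e He. exists e; auto.
Qed.

End Swap.

Definition class_cycles_shadowed {X : Type} (d : X -> X -> R) (f : X -> X)
    (E : X -> X -> Prop) (eps : R) : Prop :=
  forall a L, first_return f E a L ->
    exists p, Nat.iter L f p = p /\
      forall i, (i < L)%nat -> d (Nat.iter i f a) (Nat.iter i f p) <= eps.

Definition partition_cycles_shadowed {X : Type} (d : X -> X -> R) (f : X -> X) : Prop :=
  forall eps, 0 < eps -> exists e0, 0 < e0 /\
    forall delta E, invariant_partition d f e0 delta E -> class_cycles_shadowed d f E eps.

Section Cantor.

Context {X : Type} {d : X -> X -> R} {f finv : X -> X}.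
Hypotheses (Hm : is_metric d) (Hc : compact_space d) (Htd : totally_disconnected d).
Hypotheses (Hf : is_homeo d f finv) (Heq : equicontinuous d f finv).

Lemma invariant_partition_exists eps : 0 < eps ->
  exists delta E, invariant_partition d f eps delta E.
Proof.
  intro He. destruct (chain_small_diameter Hm Hc Htd eps He) as [l [Hl Hsmall]].
  destruct (Heq (l/2) ltac:(lra)) as [delta [Hdelta Hclose]].
  exists delta, (fun x y => forall n, chain d l (Nat.iter n f x) (Nat.iter n f y)).
  constructor; [constructor| | |]; auto.
  - intros x n; constructor.
  - intros x y H n; apply (chain_sym Hm), H.
  - intros x y z H1 H2 n; eapply chain_trans; eauto.
  - intros x y H n. rewrite <- !Nat.iter_succ_r. apply H.
  - intros x y H. apply (Hsmall x y (H 0%nat)).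
  - intros x y H n. specialize (Hclose x y H (Z.of_nat n)). rewrite !iterz_of_nat in Hclose.
    econstructor; [|constructor]. lra.
Qed.

Lemma partition_recurrent {eps delta E} : invariant_partition d f eps delta E ->
  forall y, exists L, (1 <= L)%nat /\ E (Nat.iter L f y) y.
Proof.
  intros P y. destruct (Heq delta (ip_delta_pos P)) as [r [Hr Hclose]].
  destruct (compact_cluster_point Hm Hc (fun n => Nat.iter n f y)) as [w Hw].
  destruct (Hw (r/2) ltac:(lra) 0%nat) as [n [_ Hn]].
  destruct (Hw (r/2) ltac:(lra) (S n)) as [m [Hnm Hmw]].
  exists (m - n)%nat. split; [lia|].
  assert (Hnear : d (Nat.iter n f y) (Nat.iter m f y) <= r).
  { pose proof (metric_triangle d Hm (Nat.iter n f y) w (Nat.iter m f y)).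
    pose proof (metric_sym d Hm w (Nat.iter n f y)). simpl in *. lra. }
  specialize (Hclose _ _ Hnear (- Z.of_nat n)%Z). rewrite !iterz_opp_of_nat in Hclose.
  assert (Hsplit : Nat.iter m f y = Nat.iter n f (Nat.iter (m - n) f y))
    by (rewrite <- Nat.iter_add; f_equal; lia).
  destruct Hf as [_ [_ [Hfinv _]]].
  rewrite Hsplit, !(iter_cancel f finv Hfinv) in Hclose.
  apply (ie_sym P), (ip_ball P), Hclose.
Qed.

Lemma return_window {eps delta E} (P : invariant_partition d f eps delta E) a L :
  E (Nat.iter L f a) a -> Nat.iter L f a <> a ->
  exists W : X -> Prop, W a /\ locally_constant d W /\ (forall z, W z -> E z a) /\
    (forall z, W z -> E (Nat.iter L f z) a) /\ (forall z, W z -> ~ W (Nat.iter L f z)).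
Proof.
  intros HLE Hne. set (D := d a (Nat.iter L f a)).
  assert (HD : 0 < D).
  { destruct (Rle_lt_or_eq_dec 0 D (metric_nonneg d Hm _ _)) as [H|H]; auto.
    exfalso. apply Hne. symmetry. now apply (metric_zero d Hm). }
  pose proof (ip_delta_pos P) as Hdelta.
  destruct (continuous_iter f L (proj1 Hf) a (Rmin delta (D/3)) ltac:(apply Rmin_pos; lra))
    as [r [Hr Hcont]].
  destruct (small_clopen_nbhd Hm Hc Htd a (Rmin r (Rmin delta (D/3))))
    as [W [Wa [Wsmall Wlc]]]; [repeat apply Rmin_pos; lra|].
  pose proof (Rmin_l r (Rmin delta (D/3))). pose proof (Rmin_r r (Rmin delta (D/3))).
  pose proof (Rmin_l delta (D/3)). pose proof (Rmin_r delta (D/3)).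
  assert (Hret : forall z, W z -> d (Nat.iter L f a) (Nat.iter L f z) < Rmin delta (D/3))
    by (intros z Hz; apply Hcont; specialize (Wsmall z Hz); lra).
  exists W. split; [exact Wa|split; [exact Wlc|split; [|split]]].
  - intros z Hz. apply (ip_ball P). rewrite (metric_sym d Hm). specialize (Wsmall z Hz). lra.
  - intros z Hz. eapply (ie_trans P); [|exact HLE]. apply (ip_ball P).
    rewrite (metric_sym d Hm). specialize (Hret z Hz). lra.
  - intros z Hz Hz'. specialize (Wsmall _ Hz'). specialize (Hret z Hz).
    pose proof (metric_triangle d Hm a (Nat.iter L f z) (Nat.iter L f a)) as Htri.
    rewrite (metric_sym d Hm (Nat.iter L f z)) in Htri. unfold D in *. lra.
Qed.

(* Swapping a small clopen neighbourhood W of a with its image under f^L turns the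
   first return of the class of a into an exact return of a; off the class of a,
   in particular along the intermediate orbit points, nothing changes. *)
Lemma closing_involution {eps delta E} (P : invariant_partition d f eps delta E) a L :
  first_return f E a L ->
  exists tau, is_homeo d tau tau /\ (forall z, E (tau z) z) /\
    (forall i, (i < L)%nat -> Nat.iter i (fun z => tau (f z)) a = Nat.iter i f a) /\
    Nat.iter L (fun z => tau (f z)) a = a.
Proof.
  intros [HL1 [HLE Hmin]].
  destruct (classic (Nat.iter L f a = a)) as [Hfix|Hnfix].
  { assert (Hid : continuous_map d (fun z : X => z)) by (intros x e He; exists e; auto).
    exists (fun z => z). repeat split; auto. apply (ie_refl P). }
  destruct (return_window P a L HLE Hnfix) as [W [Wa [Wlc [W_E [W_ret W_dis]]]]].
  destruct Hf as [Hfc [Hfic [Hfinv1 Hfinv2]]].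
  set (FL := Nat.iter L f). set (GL := Nat.iter L finv).
  assert (HGF : forall x, GL (FL x) = x) by (intro; now apply iter_cancel).
  assert (HFG : forall x, FL (GL x) = x) by (intro; now apply iter_cancel).
  assert (Hdis : forall z, W z -> W (GL z) -> False).
  { intros z Hz Hz'. apply (W_dis _ Hz'). fold FL. now rewrite HFG. }
  assert (W_ret' : forall z, W (GL z) -> E z a)
    by (intros z Hz; rewrite <- (HFG z); now apply W_ret).
  set (tau := swap FL GL W).
  assert (Horb : forall i, (i < L)%nat -> Nat.iter i (fun z => tau (f z)) a = Nat.iter i f a).
  { induction i as [|i IH]; intro Hi; [reflexivity|].
    rewrite !Nat.iter_succ, IH by lia. rewrite <- Nat.iter_succ.
    assert (Hoff : ~ E (Nat.iter (S i) f a) a) by (apply Hmin; lia).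
    apply swap_out; [intro H; apply Hoff, W_E, H|intro H; apply Hoff, W_ret', H]. }
  exists tau. split; [|split; [|split]].
  - assert (Htau : continuous_map d tau)
      by (apply swap_continuous; auto; now apply continuous_iter).
    split; [exact Htau|split; [exact Htau|split; intro; now apply swap_involutive]].
  - intro z. unfold tau.
    destruct (classic (W z)) as [H1|H1]; [|destruct (classic (W (GL z))) as [H2|H2]].
    + rewrite (swap_in (F := FL) (G := GL) z H1).
      eapply (ie_trans P); [apply W_ret, H1|apply (ie_sym P), W_E, H1].
    + rewrite (swap_image (F := FL) Hdis z H2).
      eapply (ie_trans P); [apply W_E, H2|apply (ie_sym P), W_ret', H2].
    + rewrite (swap_out (F := FL) z H1 H2). apply (ie_refl P).
  - exact Horb.
  - destruct L as [|L']; [lia|]. rewrite Nat.iter_succ, Horb, <- Nat.iter_succ by lia.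
    fold FL. unfold tau. rewrite (swap_image Hdis); [apply HGF|now rewrite HGF].
Qed.

Lemma cycles_shadowed_of_topologically_stable :
  topologically_stable d f finv -> partition_cycles_shadowed d f.
Proof.
  intros Hts eps He. destruct (Hts eps He) as [dT [HdT Hstable]].
  destruct (Heq (dT/2) ltac:(lra)) as [de [Hde Hequi]].
  exists (Rmin (dT/2) de). split; [apply Rmin_pos; lra|].
  intros delta E P a L HL.
  pose proof (Rmin_l (dT/2) de). pose proof (Rmin_r (dT/2) de).
  destruct (closing_involution P a L HL) as [tau [[Htau [_ [Htau2 _]]] [Htau_E [Horb Hper]]]].
  pose proof Hf as [Hfc [Hfic [Hfinv1 Hfinv2]]].
  set (g := fun z => tau (f z)) in *. set (ginv := fun z => finv (tau z)).
  assert (Hg : is_homeo d g ginv).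
  { unfold g, ginv. split; [|split; [|split]].
    - exact (continuous_comp _ _ Hfc Htau).
    - exact (continuous_comp _ _ Htau Hfic).
    - intro x. now rewrite Htau2.
    - intro x. now rewrite Hfinv2. }
  assert (HD : D_lt d f finv g ginv dT).
  { split; exists (dT/2); (split; [lra|]); intro x.
    - pose proof (ip_diam P _ _ (Htau_E (f x))). rewrite (metric_sym d Hm). unfold g. lra.
    - refine (Hequi x (tau x) _ (-1)%Z).
      rewrite (metric_sym d Hm). pose proof (ip_diam P _ _ (Htau_E x)). lra. }
  destruct (Hstable g ginv Hg HD) as [h [_ [[c [Hc' Hh]] Hconj]]].
  assert (Hiter : forall n x, h (Nat.iter n g x) = Nat.iter n f (h x))
    by (intros; now apply Nat.iter_swap_gen).
  exists (h a). split.
  - now rewrite <- Hiter, Hper.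
  - intros i Hi. rewrite <- Hiter, (Horb i Hi), (metric_sym d Hm).
    pose proof (Hh (Nat.iter i f a)). lra.
Qed.

Lemma cycles_shadowed_of_periodic_shadowing :
  strict_periodic_shadowing d f -> partition_cycles_shadowed d f.
Proof.
  intros Hs eps He. destruct (Hs eps He) as [dS [HdS Hshadow]].
  exists dS. split; auto. intros delta E P a L [HL1 [HLE _]].
  set (xs := fun i => if Nat.eqb i L then a else Nat.iter i f a).
  assert (Hxs : forall i, (i < L)%nat -> xs i = Nat.iter i f a).
  { intros i Hi. unfold xs. now rewrite (proj2 (Nat.eqb_neq i L)) by lia. }
  destruct (Hshadow L xs HL1) as [p [Hp Hclose]].
  - intros i Hi. rewrite (Hxs i Hi). unfold xs. destruct (Nat.eqb_spec (S i) L) as [HiL|HiL].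
    + rewrite <- HiL in HLE. pose proof (ip_diam P _ _ HLE). simpl in *. lra.
    + rewrite (dist_self Hm). lra.
  - unfold xs. rewrite Nat.eqb_refl. now destruct (Nat.eqb 0 L).
  - exists p. split; auto. intros i Hi. rewrite <- (Hxs i Hi). apply Hclose. lia.
Qed.

Lemma shadowed_partition_exists : partition_cycles_shadowed d f -> forall eps, 0 < eps ->
  exists delta E, invariant_partition d f eps delta E /\ class_cycles_shadowed d f E eps.
Proof.
  intros Hcyc eps He. destruct (Hcyc eps He) as [e0 [He0 Hsh]].
  destruct (invariant_partition_exists (Rmin e0 eps)) as [delta [E P]]; [now apply Rmin_pos|].
  exists delta, E. split.
  - exact (invariant_partition_mono (Rmin_r e0 eps) P).
  - exact (Hsh delta E (invariant_partition_mono (Rmin_l e0 eps) P)).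
Qed.

Lemma topologically_stable_of_cycles_shadowed :
  partition_cycles_shadowed d f -> topologically_stable d f finv.
Proof.
  intros Hcyc eps He.
  destruct (shadowed_partition_exists Hcyc (eps/4)) as [delta [E [P Hsh]]]; [lra|].
  destruct (class_cycle_conjugacy P (fun z p => d z p <= eps/4) (partition_recurrent P)
              Hsh)
    as [h [Hh_rel [Hh_map Hh_near]]].
  pose proof (ip_delta_pos P) as Hdelta.
  exists delta. split; [exact Hdelta|]. intros g ginv _ [[c [Hc' Hfg]] _].
  exists h. split; [|split].
  - intros x e He'. exists delta. split; [exact Hdelta|]. intros y Hy.
    rewrite (Hh_rel x y) by (apply (ip_ball P); lra). now rewrite (dist_self Hm).
  - exists (eps/2). split; [lra|]. intro y. destruct (Hh_near y) as [z [Hyz Hz]].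
    pose proof (ip_diam P _ _ Hyz). pose proof (metric_triangle d Hm (h y) z y).
    rewrite (metric_sym d Hm (h y) z), (metric_sym d Hm z y) in *. lra.
  - intro x. rewrite <- Hh_map. apply Hh_rel, (ip_ball P).
    rewrite (metric_sym d Hm). pose proof (Hfg x). lra.
Qed.

Lemma periodic_shadowing_of_cycles_shadowed :
  partition_cycles_shadowed d f -> strict_periodic_shadowing d f.
Proof.
  intros Hcyc eps He.
  destruct (shadowed_partition_exists Hcyc (eps/4)) as [delta [E [P Hsh]]]; [lra|].
  exists delta. split; [exact (ip_delta_pos P)|]. intros m xs Hm1 Hjump Hclosed.
  set (a := xs 0%nat).
  assert (Htrack : forall i, (i <= m)%nat -> E (xs i) (Nat.iter i f a)).
  { induction i as [|i IH]; intro Hi; [apply (ie_refl P)|].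
    eapply (ie_trans P); [apply (ie_sym P), (ip_ball P), Hjump; lia|].
    apply (ie_map P), IH; lia. }
  assert (Hret : E (Nat.iter m f a) a).
  { apply (ie_sym P). pose proof (Htrack m (Nat.le_refl m)) as H1. now rewrite <- Hclosed in H1. }
  destruct (first_return_exists a (ex_intro _ m (conj Hm1 Hret))) as [L HL].
  destruct (Hsh a L HL) as [p [Hp Hshadow]].
  pose proof HL as [HL1 [HLE _]].
  exists p. split.
  - now rewrite (iter_mod_period f L p Hp m), (first_return_divides P a L m HL Hret).
  - intros i Hi. rewrite (iter_mod_period f L p Hp i).
    pose proof (Hshadow (i mod L)%nat ltac:(apply Nat.mod_upper_bound; lia)).
    pose proof (ip_diam P _ _ (Htrack i Hi)).
    pose proof (ip_diam P _ _ (rel_iter_mod P a L HLE i)).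
    pose proof (metric_triangle d Hm (xs i) (Nat.iter i f a) (Nat.iter (i mod L) f p)).
    pose proof (metric_triangle d Hm (Nat.iter i f a) (Nat.iter (i mod L) f a)
                  (Nat.iter (i mod L) f p)).
    lra.
Qed.

End Cantor.

Theorem corollary1p2 (X : Type) (d : X -> X -> R) (f finv : X -> X) :
  cantor_space d ->
  is_homeo d f finv ->
  equicontinuous d f finv ->
  (topologically_stable d f finv <-> strict_periodic_shadowing d f).
Proof.
  intros [Hm [Hc [_ Htd]]] Hf Heq. split; intro H.
  - apply (periodic_shadowing_of_cycles_shadowed Hm Hc Htd Heq).
    exact (cycles_shadowed_of_topologically_stable Hm Hc Htd Hf Heq H).
  - apply (topologically_stable_of_cycles_shadowed Hm Hc Htd Hf Heq).
    exact (cycles_shadowed_of_periodic_shadowing Hm H).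
Qed.
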